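(* Let $G$ be a $d$-regular graph of girth at least 7. Then for every integer $1\le k<d$ and every set $S$ of $k$ vertices, $|N^2(S)|\ge\frac{kd^2}{2}$.
   Context: For a set $S$ of vertices, $N^2(S)$ denotes the set of vertices at distance exactly 2 from some vertex of $S$ (not required to be disjoint from $S$). The girth is the length of a shortest cycle. *)

From mathcomp Require Import all_boot.
Set Implicit Arguments. Unset Strict Implicit. Unset Printing Implicit Defensive.

Definition simple_graph (T : finType) (e : rel T) : Prop :=
  symmetric e /\ irreflexive e.

Definition regular (T : finType) (e : rel T) (d : nat) : Prop :=
  forall v : T, #|[set w | e v w]| = d.

(* a cycle of the graph: a duplicate-free sequence of >= 3 vertices,
   consecutive ones (cyclically) adjacent; its length is its size *)
Definition graph_cycle (T : finType) (e : rel T) (s : seq T) : bool :=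
  [&& 3 <= size s, uniq s & cycle e s].

Definition girth_ge (T : finType) (e : rel T) (g : nat) : Prop :=
  forall s : seq T, graph_cycle e s -> g <= size s.

Definition dist2 (T : finType) (e : rel T) (u v : T) : bool :=
  [&& u != v, ~~ e u v & [exists w, e u w && e w v]].

Definition N2 (T : finType) (e : rel T) (S : {set T}) : {set T} :=
  [set v | [exists u in S, dist2 e u v]].

From mathcomp Require Import all_boot zify.
Set Implicit Arguments. Unset Strict Implicit. Unset Printing Implicit Defensive.

(* The proof is a second-moment
   (Bonferroni) count:
   - for any finite family of sets, counting every element v by the number m
     of sets containing it and using 3m <= 2[m > 0] + m^2 gives
     2 sum_i |F_i| <= 2 |U_i F_i| + sum_{i <> j} |F_i /\ F_j|;
   - girth >= 5 gives |n2 u| >= d(d-1): the sets N(a) \ {u}, a ~ u, are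
     pairwise disjoint (no 4-cycles) subsets of n2 u (no triangles), which is
     again read off from the Bonferroni inequality;
   - girth >= 7 gives |n2 u /\ n2 u'| <= d for u <> u' (no 4- or 6-cycles);
   - hence 2kd(d-1) <= 2|N^2(S)| + k(k-1)d, and k < d yields kd^2 <= 2|N^2(S)|. *)

Lemma card_sum_indicator (T : finType) (A : {set T}) : #|A| = \sum_v (v \in A : nat).
Proof. by rewrite -sum1_card big_mkcond; apply: eq_bigr => v _; case: (v \in A). Qed.

(* The pointwise inequality behind the Bonferroni bound: (m-1)(m-2) >= 0. *)
Lemma three_mul_le_sq m : 3 * m <= 2 * (0 < m) + m ^ 2.
Proof. case: m => [|m] //=; nia. Qed.

Section Bonferroni.
Variables (I T : finType) (F : I -> {set T}) (S : {set I}).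

Definition cover_mult (v : T) : nat := #|[set i in S | v \in F i]|.

Lemma cover_mult_sum v : cover_mult v = \sum_(i in S) (v \in F i : nat).
Proof.
rewrite /cover_mult card_sum_indicator [RHS]big_mkcond; apply: eq_bigr => i _.
by rewrite inE; case: (i \in S).
Qed.

Lemma sum_card_cover_mult : \sum_(i in S) #|F i| = \sum_v cover_mult v.
Proof.
under eq_bigr do rewrite card_sum_indicator.
by rewrite exchange_big; apply: eq_bigr => v _; rewrite cover_mult_sum.
Qed.

Lemma sum_card_pairs_cover_mult :
  \sum_(i in S) \sum_(j in S) #|F i :&: F j| = \sum_v cover_mult v ^ 2.
Proof.
under eq_bigr do under eq_bigr do rewrite card_sum_indicator.
under eq_bigr do rewrite exchange_big.
rewrite exchange_big; apply: eq_bigr => v _.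
rewrite cover_mult_sum expnS expn1 big_distrl; apply: eq_bigr => i _.
rewrite big_distrr; apply: eq_bigr => j _.
by rewrite inE; case: (v \in F i); case: (v \in F j).
Qed.

Lemma card_bigcup_cover_mult : #|\bigcup_(i in S) F i| = \sum_v (0 < cover_mult v).
Proof.
rewrite card_sum_indicator; apply: eq_bigr => v _; congr nat_of_bool.
rewrite card_gt0; apply/bigcupP/set0Pn => [[i iS viF]|[i]].
  by exists i; rewrite inE iS.
by rewrite inE => /andP[iS viF]; exists i.
Qed.

Lemma bonferroni :
  2 * \sum_(i in S) #|F i| <=
  2 * #|\bigcup_(i in S) F i| + \sum_(i in S) \sum_(j in S :\ i) #|F i :&: F j|.
Proof.
have split_diag : \sum_(i in S) \sum_(j in S) #|F i :&: F j| =
    \sum_(i in S) #|F i| + \sum_(i in S) \sum_(j in S :\ i) #|F i :&: F j|.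
  by rewrite -big_split; apply: eq_bigr => i iS; rewrite (big_setD1 i) //= setIid.
have pointwise : 3 * \sum_v cover_mult v <=
    2 * \sum_v (0 < cover_mult v) + \sum_v cover_mult v ^ 2.
  by rewrite !big_distrr -big_split; apply: leq_sum => v _; exact: three_mul_le_sq.
move: pointwise; rewrite -card_bigcup_cover_mult -sum_card_pairs_cover_mult.
by rewrite split_diag -sum_card_cover_mult; lia.
Qed.

End Bonferroni.

Section ShortCycles.
Variables (T : finType) (e : rel T).
Hypothesis irr : irreflexive e.

Lemma edge_neq x y : e x y -> x != y.
Proof. by apply: contraTneq => ->; rewrite irr. Qed.

Lemma girth_ge_mono g h : girth_ge e g -> h <= g -> girth_ge e h.
Proof. by move=> gir hg s /gir; apply: leq_trans. Qed.

(* Large girth excludes triangles, 4-cycles and 6-cycles; each lemma lists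
   exactly the distinctness conditions needed to form a genuine cycle. *)
Lemma no_triangle x y z : girth_ge e 4 -> e x y -> e y z -> e z x -> False.
Proof.
move=> gir xy yz zx; suff: graph_cycle e [:: x; y; z] by move/gir.
rewrite /graph_cycle /= !inE !negb_or xy yz zx.
by rewrite (edge_neq xy) (edge_neq yz) (eq_sym x z) (edge_neq zx).
Qed.

Lemma no_square x y z t : girth_ge e 5 ->
  e x y -> e y z -> e z t -> e t x -> x != z -> y != t -> False.
Proof.
move=> gir xy yz zt tx xz yt; suff: graph_cycle e [:: x; y; z; t] by move/gir.
rewrite /graph_cycle /= !inE !negb_or xy yz zt tx xz yt.
by rewrite (edge_neq xy) (edge_neq yz) (edge_neq zt) (eq_sym x t) (edge_neq tx).
Qed.

Lemma no_hexagon x1 x2 x3 x4 x5 x6 : girth_ge e 7 ->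
  e x1 x2 -> e x2 x3 -> e x3 x4 -> e x4 x5 -> e x5 x6 -> e x6 x1 ->
  x1 != x3 -> x1 != x4 -> x1 != x5 -> x2 != x4 -> x2 != x5 -> x2 != x6 ->
  x3 != x5 -> x3 != x6 -> x4 != x6 -> False.
Proof.
move=> gir e12 e23 e34 e45 e56 e61 n13 n14 n15 n24 n25 n26 n35 n36 n46.
suff: graph_cycle e [:: x1; x2; x3; x4; x5; x6] by move/gir.
rewrite /graph_cycle /= !inE !negb_or e12 e23 e34 e45 e56 e61.
rewrite n13 n14 n15 n24 n25 n26 n35 n36 n46 (edge_neq e12) (edge_neq e23).
by rewrite (edge_neq e34) (edge_neq e45) (edge_neq e56) (eq_sym x1 x6) (edge_neq e61).
Qed.

End ShortCycles.

Section SecondNeighbourhood.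
Variables (T : finType) (e : rel T).
Hypothesis sym : symmetric e.
Hypothesis irr : irreflexive e.

Definition nbhd (v : T) : {set T} := [set w | e v w].
Definition n2 (u : T) : {set T} := [set v | dist2 e u v].

Lemma dist2P u v :
  reflect [/\ u != v, ~~ e u v & exists2 a, e u a & e a v] (dist2 e u v).
Proof.
apply: (iffP and3P) => [[nuv nev /existsP[a /andP[ua av]]]|[nuv nev [a ua av]]].
  by split=> //; exists a.
by split=> //; apply/existsP; exists a; rewrite ua av.
Qed.

Lemma N2_bigcup (S : {set T}) : N2 e S = \bigcup_(u in S) n2 u.
Proof.
apply/setP => v; rewrite inE; apply/existsP/bigcupP => [[u /andP[uS uv]]|[u uS]].
  by exists u; rewrite ?inE.
by rewrite inE => uv; exists u; rewrite uS.
Qed.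

(* Girth >= 5: every neighbour a of u contributes its d - 1 other neighbours to
   n2 u, and these contributions are pairwise disjoint. *)
Lemma card_n2_ge d u : regular e d -> girth_ge e 5 -> d * (d - 1) <= #|n2 u|.
Proof.
move=> reg gir; pose F a := nbhd a :\ u.
have cardF a : a \in nbhd u -> #|F a| = d - 1.
  by rewrite inE => ua; rewrite /F -(reg a) [in RHS](cardsD1 u) inE sym ua addKn.
have disjF a b : a \in nbhd u -> b \in nbhd u -> b != a -> #|F a :&: F b| = 0.
  rewrite !inE => ua ub nba; apply/eqP; rewrite cards_eq0; apply/eqP/setP => v.
  rewrite !inE; apply/negbTE/negP => /andP[/andP[nvu av] /andP[_ bv]].
  by apply: (no_square irr gir ua av (t := b)); rewrite 1?sym // eq_sym.
have cupF : \bigcup_(a in nbhd u) F a \subset n2 u.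
  apply/bigcupsP => a; rewrite !inE => ua; apply/subsetP => v; rewrite !inE.
  case/andP=> nvu av; apply/dist2P; split; first by rewrite eq_sym.
    apply/negP => uv; have gir4 := girth_ge_mono gir (isT : 4 <= 5).
    by apply: (no_triangle irr gir4 ua av); rewrite sym.
  by exists a.
(* Bonferroni with vanishing pairwise terms: sum of the |F a| <= |U_a F a|. *)
have := bonferroni F (nbhd u).
rewrite [X in _ + X]big1 => [|a ua]; last by rewrite big1 // => b /setD1P[nba ub]; exact: disjF.
rewrite (eq_bigr _ cardF) sum_nat_const reg addn0 leq_mul2l /=.
by move/leq_trans; apply; exact: subset_leq_card.
Qed.

Lemma n2I_sub_common u u' w : girth_ge e 7 -> u != u' -> e u w -> e u' w ->
  n2 u :&: n2 u' \subset nbhd w.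
Proof.
move=> gir nuu uw u'w; apply/subsetP => v; rewrite !inE.
case/andP=> /dist2P[nuv nuev [a ua av]] /dist2P[nu'v nu'ev [b u'b bv]].
have [<-|naw] := eqVneq a w; first by [].
have gir5 := girth_ge_mono gir (isT : 5 <= 7).
have wu : e w u by rewrite sym.
(* Otherwise u - a - v - b - u' - w - u closes a cycle of length 4 or 6. *)
exfalso; have [ebw|nbw] := eqVneq b w.
  by subst b; apply: (no_square irr gir5 ua av _ wu nuv naw); rewrite sym.
have [eab|nab] := eqVneq a b.
  by subst b; apply: (no_square irr gir5 ua _ u'w wu nuu naw); rewrite sym.
apply: (no_hexagon irr gir ua av _ _ u'w wu nuv _ nuu nab _ naw _ _ nbw).
- by rewrite sym.
- by rewrite sym.
- by apply: contraNneq nuev => ->.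
- by apply: contraNneq nu'ev => <-.
- by rewrite eq_sym.
- by apply: contraNneq nuev => ->.
Qed.

(* If u and u' have no common neighbour, then choosing for each common vertex v
   at distance 2 a middle vertex on a path u - a - v is injective (girth >= 7),
   so there are at most deg u = d such vertices. *)
Lemma card_n2I_no_common d u u' : regular e d -> girth_ge e 7 ->
  (forall w, e u w -> ~~ e u' w) -> #|n2 u :&: n2 u'| <= d.
Proof.
move=> reg gir nocommon; pose mid v := odflt u [pick a | e u a && e a v].
have midP v : v \in n2 u -> e u (mid v) && e (mid v) v.
  rewrite inE => /dist2P[_ _ [a ua av]]; rewrite /mid.
  by case: pickP => [b //|/(_ a)]; rewrite ua av.
have mid_inj : {in n2 u :&: n2 u' &, injective mid}.
  move=> v1 v2 /setIP[D1 D1'] /setIP[D2 D2'] eqmid.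
  have /andP[ua av1] := midP v1 D1; have /andP[_] := midP v2 D2.
  rewrite -{}eqmid => av2; set a := mid v1 in ua av1 av2.
  move: D1'; rewrite inE => /dist2P[nu'v1 nu'ev1 [b1 u'b1 b1v1]].
  move: D2'; rewrite inE => /dist2P[nu'v2 nu'ev2 [b2 u'b2 b2v2]].
  apply/eqP; apply: contraT => nv12; exfalso.
  have gir5 := girth_ge_mono gir (isT : 5 <= 7).
  have nab1 : a != b1 by apply: contraNneq (nocommon a ua) => ->.
  (* v1 <> v2 would close the cycle a - v1 - b1 (- u') - b2 - v2 - a,
     of length 4 or 6. *)
  have [eb|nb] := eqVneq b1 b2.
    by subst b2; apply: (no_square irr gir5 av1 _ b2v2 _ nab1 nv12); rewrite sym.
  apply: (no_hexagon irr gir av1 _ _ u'b2 b2v2 _ nab1 _ _ _ _ nv12 nb _ _).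
  - by rewrite sym.
  - by rewrite sym.
  - by rewrite sym.
  - by apply: contraNneq nu'ev1 => <-.
  - by apply: contraNneq (nocommon a ua) => ->.
  - by rewrite eq_sym.
  - by apply: contraNneq nu'ev1 => ->.
  - by apply: contraNneq nu'ev2 => <-.
  - by [].
rewrite -(card_in_imset mid_inj) -(reg u); apply: subset_leq_card.
apply/subsetP => _ /imsetP[v /setIP[D _] ->].
by rewrite inE; case/andP: (midP v D).
Qed.

Lemma card_n2I_le d u u' : regular e d -> girth_ge e 7 -> u != u' ->
  #|n2 u :&: n2 u'| <= d.
Proof.
move=> reg gir nuu; case: (pickP (fun w => e u w && e u' w)) => [w /andP[uw u'w]|none].
  by rewrite -(reg w); exact: subset_leq_card (n2I_sub_common gir nuu uw u'w).
apply: card_n2I_no_common => // w uw; apply/negP => u'w.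
by have := none w; rewrite uw u'w.
Qed.

End SecondNeighbourhood.

(* The final arithmetic: with 1 <= k < d we have k (k - 1) d <= k (d - 2) d, so
   2 k d (d - 1) <= 2 N + k (k - 1) d gives k d^2 <= 2 N. *)
Lemma second_moment_arith k d N : 1 <= k -> k < d ->
  2 * (k * (d * (d - 1))) <= 2 * N + k * ((k - 1) * d) -> k * d ^ 2 <= 2 * N.
Proof.
case: k => [|k] // _; case: d => [|[|d]] // kd.
rewrite !subSS !subn0 => bound.
have pairs_le : k.+1 * (k * d.+2) <= k.+1 * (d * d.+2).
  by rewrite leq_mul2l leq_mul2r -ltnS -ltnS kd !orbT.
by move: bound pairs_le; rewrite expnS expn1; lia.
Qed.

Theorem lemma5 (T : finType) (e : rel T) (d : nat) :
  simple_graph e -> regular e d -> girth_ge e 7 ->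
  forall (k : nat) (S : {set T}),
    1 <= k -> k < d -> #|S| = k ->
    k * d ^ 2 <= 2 * #|N2 e S|.
Proof.
move=> [sym irr] reg gir k S k1 kd cS.
have gir5 := girth_ge_mono gir (isT : 5 <= 7).
have lower : k * (d * (d - 1)) <= \sum_(u in S) #|n2 e u|.
  rewrite -cS -sum_nat_const; apply: leq_sum => u _.
  exact (card_n2_ge sym irr u reg gir5).
have upper : \sum_(u in S) \sum_(u' in S :\ u) #|n2 e u :&: n2 e u'| <= k * ((k - 1) * d).
  rewrite -cS -sum_nat_const; apply: leq_sum => u uS.
  rewrite [#|S|](cardsD1 u) uS add1n subSS subn0 -sum_nat_const.
  apply: leq_sum => u' /setD1P[nu'u _].
  by apply: (card_n2I_le sym irr reg gir); rewrite eq_sym.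
apply: second_moment_arith k1 kd _; rewrite N2_bigcup.
apply: leq_trans (leq_trans _ (bonferroni (n2 e) S)) _.
  by rewrite leq_mul2l lower orbT.
by rewrite leq_add2l upper.
Qed.
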